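(* Under Assumption A1 (with the delay process indexed by all integers), the impulse response of the channel uncertainty satisfies the following. 1. For all $i\in\mathcal{D}$ and $k=0,1,2,\dots$: $\mathbb{E}\{\omega(k,k-i)\}=0$. 2. For all $i\in\mathcal{D}$ and $k_1,k_2\in\{0,1,2,\dots\}$: $$\mathbb{E}\{\omega(k_1,k_1-i)\omega(k_2,k_2-i)\}=\delta(k_1-k_2)\,\alpha_i^2p_i(1-p_i).$$ 3. For all $i_1\neq i_2$ in $\mathcal{D}$ and $k_1,k_2\in\{0,1,2,\dots\}$: $$\mathbb{E}\{\omega(k_1,k_1-i_1)\omega(k_2,k_2-i_2)\}=-\delta(k_1-i_1-k_2+i_2)\,\alpha_{i_1}\alpha_{i_2}p_{i_1}p_{i_2}.$$
   Context: Fix an integer $\bar\tau\ge1$, let $\mathcal{D}=\{0,\dots,\bar\tau\}$, and fix real weights $\alpha_0,\dots,\alpha_{\bar\tau}$. Assumption A1: $\{\tau_n\}$ is an i.i.d. sequence of $\mathcal{D}$-valued random variables with $\Pr\{\tau_n=i\}=p_i$, where $p_i\in[0,1]$ and $\sum_ip_i=1$. Let $\delta$ denote the Kronecker delta ($\delta(0)=1$, $\delta(m)=0$ for $m\ne0$). The impulse response of the channel uncertainty is $\omega(k,n)=\alpha_i[\delta(\tau_n-i)-p_i]$ if $k=n+i$ with $i\in\mathcal{D}$, and $\omega(k,n)=0$ otherwise. *)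

From HB Require Import structures.
From mathcomp Require Import all_boot all_order all_algebra.
From mathcomp Require Import all_classical all_reals all_analysis.
Set Implicit Arguments. Unset Strict Implicit. Unset Printing Implicit Defensive.
Import Order.TTheory GRing.Theory Num.Theory.
Local Open Scope classical_set_scope.
Local Open Scope ring_scope.

Definition kdelta {R : nzRingType} (m : int) : R := (m == 0)%:R.

(* Impulse response of the channel uncertainty:
   omega(k,n) = alpha_i [delta(tau_n - i) - p_i] if k = n + i with i in {0..taubar},
   and 0 otherwise. Time indices are integers. *)
Definition omega {R : nzRingType} {T : Type} (taubar : nat) (alpha p : nat -> R)
  (tau : int -> T -> nat) (k n : int) : T -> R :=
  fun w => if (0 <= k - n) && (`|k - n|%N <= taubar)%N then
             alpha `|k - n|%N * (kdelta (Posz (tau n w) - Posz `|k - n|%N) - p `|k - n|%N)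
           else 0.

Definition mutually_independent {d} {T : measurableType d} {R : realType}
  (P : probability T R) (tau : int -> T -> nat) : Prop :=
  forall (s : seq int) (v : int -> nat), uniq s ->
    P (\big[setI/setT]_(j <- s) [set w | tau j w = v j]) =
    (\prod_(j <- s) P [set w | tau j w = v j])%E.

Definition assumptionA1 {d} {T : measurableType d} {R : realType}
  (P : probability T R) (taubar : nat) (p : nat -> R) (tau : int -> T -> nat) : Prop :=
  [/\ (forall n (i : nat), measurable [set w | tau n w = i])
      /\ (forall n w, (tau n w <= taubar)%N),
      (forall n (i : nat), (i <= taubar)%N -> P [set w | tau n w = i] = (p i)%:E),
      (forall i : nat, (i <= taubar)%N -> 0 <= p i <= 1),
      \sum_(0 <= i < taubar.+1) p i = 1
    & mutually_independent P tau].

(* The uncertainty omega(k, k - i) = alpha_i (1{tau_(k-i) = i} - p_i) is a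
   scaled indicator centred at its mean, so its second moments are covariances
   alpha_i1 alpha_i2 (P(A `&` B) - p_i1 p_i2) of the events A = {tau_(k1-i1) = i1}
   and B = {tau_(k2-i2) = i2}.  When k1 - i1 <> k2 - i2 the events are independent
   and the covariance vanishes; at a common time index they coincide (i1 = i2,
   giving p (1 - p)) or are disjoint (i1 <> i2, giving - p_i1 p_i2). *)

From HB Require Import structures.
From mathcomp Require Import all_boot all_order all_algebra.
From mathcomp Require Import all_classical all_reals all_analysis.
From mathcomp Require Import ring.
Import Order.TTheory GRing.Theory Num.Theory.
Local Open Scope ring_scope.
Local Open Scope classical_set_scope.

Section indicator_covariance.
Context d (T : measurableType d) (R : realType) (P : probability T R).

Lemma Lfun_indic (A : set T) : measurable A -> (\1_A : T -> R) \in Lfun P 1.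
Proof. by move=> mA; apply/Lfun1_integrable; exact: integrable_indic. Qed.

Lemma expectation_centered (X : T -> R) (x : R) :
  X \in Lfun P 1 -> ('E_P[X] = x%:E)%E -> ('E_P[(X \- cst x)%R] = 0)%E.
Proof.
by move=> X1 EX; rewrite expectationB ?Lfun_cst // EX expectation_cst subee.
Qed.

Lemma expectation_centeredM (X Y : T -> R) (x y : R) :
  ('E_P[X] = x%:E -> 'E_P[Y] = y%:E ->
   'E_P[((X \- cst x) \* (Y \- cst y))%R] = covariance P X Y)%E.
Proof. by move=> EX EY; rewrite covariance.unlock EX EY. Qed.

Lemma covariance_indic (A B : set T) : measurable A -> measurable B ->
  covariance P \1_A \1_B = (P (A `&` B) - P A * P B)%E.
Proof.
move=> mA mB; have mAB := measurableI _ _ mA mB.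
have indicM : (\1_A * \1_B)%R = \1_(A `&` B) :> (T -> R) by rewrite indicI.
by rewrite covarianceE ?indicM ?Lfun_indic // !expectation_indic.
Qed.

Lemma covariance_scaled_indic (a b : R) (A B : set T) :
  measurable A -> measurable B ->
  covariance P (a \o* \1_A) (b \o* \1_B) = ((a * b)%:E * (P (A `&` B) - P A * P B))%E.
Proof.
move=> mA mB; have mAB := measurableI _ _ mA mB.
have indicM : (\1_A * \1_B)%R = \1_(A `&` B) :> (T -> R) by rewrite indicI.
have indicMZ : (\1_A * (b \o* \1_B))%R = b \o* \1_(A `&` B) :> (T -> R).
  by apply/funext => w; rewrite indicI !fctE /= mulrA.
rewrite covarianceZl ?indicMZ ?Lfun_scale ?Lfun_indic //.
by rewrite covarianceZr ?indicM ?Lfun_indic // covariance_indic // muleA EFinM.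
Qed.

End indicator_covariance.

Lemma mutually_independent_pair d (T : measurableType d) (R : realType)
    (P : probability T R) (tau : int -> T -> nat) (n1 n2 : int) (v1 v2 : nat) :
  mutually_independent P tau -> n1 != n2 ->
  P ([set w | tau n1 w = v1] `&` [set w | tau n2 w = v2]) =
  (P [set w | tau n1 w = v1] * P [set w | tau n2 w = v2])%E.
Proof.
move=> indep n12.
have := indep [:: n1; n2] (fun j => if j == n1 then v1 else v2).
rewrite /= inE n12 => /(_ isT).
by rewrite !big_cons !big_nil setIT mule1 eqxx eq_sym (negbTE n12).
Qed.

Section delay_channel.
Context d (T : measurableType d) (R : realType) (P : probability T R).
Context (taubar : nat) (alpha p : nat -> R) (tau : int -> T -> nat).
Hypothesis A1 : assumptionA1 P taubar p tau.

Let delay_event (n : int) (i : nat) : set T := [set w | tau n w = i].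

Lemma measurable_delay_event (n : int) (i : nat) : measurable (delay_event n i).
Proof. by case: A1 => -[mtau _] *; exact: mtau. Qed.
Local Hint Resolve measurable_delay_event : core.

Lemma omega_centered (k : int) (i : nat) : (i <= taubar)%N ->
  omega taubar alpha p tau k (k - i%:Z) =
  alpha i \o* \1_(delay_event (k - i%:Z) i) \- cst (alpha i * p i).
Proof.
move=> hi; apply/funext => w; rewrite /omega.
have -> : k - (k - i%:Z) = i%:Z by ring.
rewrite /= hi /kdelta subr_eq0 eqz_nat /indic mulrBr [_%:R * _]mulrC.
congr (_ * (_ : bool)%:R - _).
by apply/eqP/idP => [e|/set_mem /= ->]; first exact: mem_set.
Qed.

Lemma probability_delay_event (n : int) (i : nat) : (i <= taubar)%N ->
  P (delay_event n i) = (p i)%:E.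
Proof. by case: A1 => _ Ptau *; exact: Ptau. Qed.

Lemma probability_delay_eventsI (n1 n2 : int) (i1 i2 : nat) :
  (i1 <= taubar)%N -> (i2 <= taubar)%N ->
  P (delay_event n1 i1 `&` delay_event n2 i2) =
  (if n1 == n2 then (i1 == i2)%:R * p i1 else p i1 * p i2)%:E.
Proof.
move=> h1 h2; have [<-|n12] := eqVneq n1 n2; last first.
  by case: A1 => _ _ _ _ indep; rewrite mutually_independent_pair //
    !probability_delay_event.
have [<-|i12] := eqVneq i1 i2; first by rewrite setIid mul1r probability_delay_event.
have -> : delay_event n1 i1 `&` delay_event n1 i2 = set0.
  by apply/seteqP; split => // w [/= e1 e2]; rewrite -e1 e2 eqxx in i12.
by rewrite measure0 mul0r.
Qed.

Lemma expectation_scaled_delay_indic (a : R) (n : int) (i : nat) : (i <= taubar)%N ->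
  ('E_P[a \o* \1_(delay_event n i)] = (a * p i)%:E)%E.
Proof.
move=> hi; rewrite expectationZl ?Lfun_indic //.
by rewrite expectation_indic // probability_delay_event.
Qed.

Lemma expectation_omega (k : int) (i : nat) : (i <= taubar)%N ->
  ('E_P[omega taubar alpha p tau k (k - i%:Z)] = 0)%E.
Proof.
move=> hi; rewrite omega_centered //; apply: expectation_centered.
  by rewrite Lfun_scale ?Lfun_indic.
exact: expectation_scaled_delay_indic.
Qed.

Lemma expectation_omegaM (k1 k2 : int) (i1 i2 : nat) :
  (i1 <= taubar)%N -> (i2 <= taubar)%N ->
  ('E_P[omega taubar alpha p tau k1 (k1 - i1%:Z)
        \* omega taubar alpha p tau k2 (k2 - i2%:Z)] =
   (alpha i1 * alpha i2 *
      ((if k1 - i1%:Z == k2 - i2%:Z then (i1 == i2)%:R * p i1 else p i1 * p i2)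
       - p i1 * p i2))%:E)%E.
Proof.
move=> h1 h2; rewrite !omega_centered // expectation_centeredM;
  try exact: expectation_scaled_delay_indic.
rewrite covariance_scaled_indic //.
by rewrite probability_delay_eventsI // !probability_delay_event // -EFinM -EFinB -EFinM.
Qed.

End delay_channel.

Theorem lemma3p1 (d : measure_display) (T : measurableType d) (R : realType)
  (P : probability T R) (taubar : nat) (alpha p : nat -> R) (tau : int -> T -> nat) :
  (1 <= taubar)%N ->
  assumptionA1 P taubar p tau ->
  [/\ (forall (i k : nat), (i <= taubar)%N ->
         ('E_P[omega taubar alpha p tau k (k%:Z - i%:Z)] = 0)%E),
      (forall (i k1 k2 : nat), (i <= taubar)%N ->
         ('E_P[omega taubar alpha p tau k1 (k1%:Z - i%:Z)
               \* omega taubar alpha p tau k2 (k2%:Z - i%:Z)]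
          = (kdelta (k1%:Z - k2%:Z) * alpha i ^+ 2 * p i * (1 - p i))%:E)%E)
    & (forall (i1 i2 k1 k2 : nat), (i1 <= taubar)%N -> (i2 <= taubar)%N -> i1 != i2 ->
         ('E_P[omega taubar alpha p tau k1 (k1%:Z - i1%:Z)
               \* omega taubar alpha p tau k2 (k2%:Z - i2%:Z)]
          = (- (kdelta (k1%:Z - i1%:Z - k2%:Z + i2%:Z) * alpha i1 * alpha i2
                * p i1 * p i2))%:E)%E)].
Proof.
move=> _ A1; split.
- by move=> i k hi; exact: expectation_omega.
- move=> i k1 k2 hi; rewrite expectation_omegaM // (inj_eq (addIr _)) eqz_nat eqxx.
  by rewrite /kdelta subr_eq0 eqz_nat; case: eqP => _ /=; congr EFin; ring.
- move=> i1 i2 k1 k2 h1 h2 i12; rewrite expectation_omegaM // (negbTE i12).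
  rewrite /kdelta (_ : k1%:Z - i1%:Z - k2%:Z + i2%:Z = (k1%:Z - i1%:Z) - (k2%:Z - i2%:Z));
    last by ring.
  by rewrite subr_eq0; case: eqP => _ /=; congr EFin; ring.
Qed.
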